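(* Let $k,j\ge1$ and let $Y_k=\mathrm{diag}(y_k(x_0),\dots,y_k(x_{N-1}))$ and $Y_j=\mathrm{diag}(y_j(x_0),\dots,y_j(x_{N-1}))$ be diagonal matrices of samples of smooth periodic functions $y_k,y_j$. Then $$\mathrm{ht}([Y_kD_k,Y_jD_j])\le k+j-1.$$
   Context: Uniform periodic grid $x_i=a+(b-a)\frac iN$, $i=0,\dots,N-1$. $D_F=N\cdot M$ where $M$ is the $N\times N$ circulant matrix with $-1$ on the diagonal, $1$ on the superdiagonal and $1$ in the bottom-left corner; $D_B=-D_F^\dagger$; $D_2=D_BD_F=D_FD_B$. $D_k=D_2^{k/2}$ for $k$ even and $D_k=D_FD_2^{(k-1)/2}$ for $k$ odd. An $N\times N$ matrix $P$ (family indexed by $N$) has height $m$ if $m$ is the highest order such that $\|P\|_2$ grows as $N^m$ as $N\to\infty$; $\mathrm{ht}(P)\le m$ means $\|P\|_2=O(N^m)$. *)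

From HB Require Import structures.
From mathcomp Require Import all_boot all_order all_algebra.
From mathcomp Require Import all_classical all_reals all_analysis.
Set Implicit Arguments. Unset Strict Implicit. Unset Printing Implicit Defensive.
Import Order.TTheory GRing.Theory Num.Theory.
Local Open Scope ring_scope.
Local Open Scope classical_set_scope.

Section Defs.
Variable R : realType.

Definition is_smooth (f : R -> R) : Prop :=
  forall (n : nat) (x : R), derivable (derive1n n f) x 1.

Definition is_periodic (p : R) (f : R -> R) : Prop := forall x, f (x + p) = f x.

Definition gridpt (a b : R) (N i : nat) : R := a + (b - a) * (i%:R / N%:R).

Definition sampleDiag (a b : R) (y : R -> R) (N : nat) : 'M[R]_N :=
  \matrix_(i < N, j < N) (if i == j then y (gridpt a b N i) else 0).

Definition circM (N : nat) : 'M[R]_N :=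
  \matrix_(i < N, j < N)
    ((if (j : nat) == ((i + 1) %% N)%N then 1 else 0) - (if i == j then 1 else 0)).

Definition DF (N : nat) : 'M[R]_N := N%:R *: circM N.
Definition DB (N : nat) : 'M[R]_N := - (DF N)^T.
Definition D2 (N : nat) : 'M[R]_N := DB N *m DF N.
Definition Dk (k N : nat) : 'M[R]_N :=
  if odd k then DF N *m (D2 N ^+ k./2) else D2 N ^+ k./2.

Definition commut (N : nat) (A B : 'M[R]_N) : 'M[R]_N := A *m B - B *m A.

Definition vnorm2 (n : nat) (v : 'cV[R]_n) : R := Num.sqrt (\sum_i v i 0 ^+ 2).
Definition opnorm2 (m n : nat) (A : 'M[R]_(m, n)) : R :=
  sup [set r | exists v : 'cV[R]_n, vnorm2 v <= 1 /\ r = vnorm2 (A *m v)].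

Definition ht_le (P : forall N : nat, 'M[R]_N) (m : nat) : Prop :=
  exists (C : R) (N0 : nat), forall N : nat, (N0 <= N)%N ->
    opnorm2 (P N) <= C * N%:R ^+ m.
End Defs.

From HB Require Import structures.
From mathcomp Require Import all_boot all_order all_algebra.
From mathcomp Require Import all_classical all_reals all_analysis.
From mathcomp Require Import ring lra.
Set Implicit Arguments. Unset Strict Implicit. Unset Printing Implicit Defensive.
Import Order.TTheory GRing.Theory Num.Theory numFieldNormedType.Exports.
Local Open Scope ring_scope.

(* Write S for the cyclic shift, so that D_F = N (S - 1) and D_B = N (1 - S^-1),
   and bound norms in squared form, which is stable under sums, products and
   scalings.  If Y samples a smooth periodic y on the grid, S Y - Y S is again a
   weighted shift, with weights y(x_(i+1)) - y(x_i) = O(1/N) by the mean value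
   theorem; so D_F and D_B have height 1 while [D_F, Y] and [D_B, Y] have
   height 0.  The Leibniz rule [A B, Y] = A [B, Y] + [A, Y] B propagates this:
   D_k has height k and [D_k, Y] has height k - 1.  Finally, diagonal matrices
   commute with each other and so do the D_k, whence
     [Y_k D_k, Y_j D_j] = Y_k [D_k, Y_j] D_j - Y_j [D_j, Y_k] D_k,
   of height (k - 1) + j. *)

Section SquaredNormBounds.
Variable R : realFieldType.

Definition sqnorm n (v : 'cV[R]_n) : R := \sum_i v i 0 ^+ 2.

Definition sqnorm_le m n (A : 'M[R]_(m, n)) (c : R) : Prop :=
  0 <= c /\ forall v, sqnorm (A *m v) <= c * sqnorm v.

Lemma sqnorm_ge0 n (v : 'cV[R]_n) : 0 <= sqnorm v.
Proof. by apply: sumr_ge0 => i _; exact: sqr_ge0. Qed.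

Lemma sqnorm0 n : sqnorm (0 : 'cV[R]_n) = 0.
Proof. by rewrite /sqnorm big1 // => i _; rewrite mxE expr0n. Qed.

Lemma sqnormZ n (s : R) (v : 'cV[R]_n) : sqnorm (s *: v) = s ^+ 2 * sqnorm v.
Proof. by rewrite /sqnorm mulr_sumr; apply: eq_bigr => i _; rewrite mxE exprMn. Qed.

Lemma sqnormN n (v : 'cV[R]_n) : sqnorm (- v) = sqnorm v.
Proof. by rewrite -scaleN1r sqnormZ sqrrN expr1n mul1r. Qed.

Lemma sqnormD_le n (u v : 'cV[R]_n) : sqnorm (u + v) <= 2 * sqnorm u + 2 * sqnorm v.
Proof.
rewrite /sqnorm !mulr_sumr -big_split /=; apply: ler_sum => i _.
by rewrite mxE; have := sqr_ge0 (u i 0 - v i 0); lra.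
Qed.

Lemma sqnorm_leW m n (A : 'M[R]_(m, n)) c d : c <= d -> sqnorm_le A c -> sqnorm_le A d.
Proof.
move=> cd [c0 hA]; split => [|v]; first exact: le_trans cd.
by apply: le_trans (hA v) _; rewrite ler_wpM2r ?sqnorm_ge0.
Qed.

Lemma sqnorm_leM m n p (A : 'M[R]_(m, n)) (B : 'M[R]_(n, p)) c d :
  sqnorm_le A c -> sqnorm_le B d -> sqnorm_le (A *m B) (c * d).
Proof.
move=> [c0 hA] [d0 hB]; split=> [|v]; first exact: mulr_ge0.
by rewrite -mulmxA; apply: le_trans (hA _) _; rewrite -mulrA ler_wpM2l.
Qed.

Lemma sqnorm_leD m n (A B : 'M[R]_(m, n)) c d :
  sqnorm_le A c -> sqnorm_le B d -> sqnorm_le (A + B) (2 * c + 2 * d).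
Proof.
move=> [c0 hA] [d0 hB]; split=> [|v]; first by rewrite addr_ge0 ?mulr_ge0.
rewrite mulmxDl; apply: le_trans (sqnormD_le _ _) _.
by have := hA v; have := hB v; have := sqnorm_ge0 v; nra.
Qed.

Lemma sqnorm_leN m n (A : 'M[R]_(m, n)) c : sqnorm_le A c -> sqnorm_le (- A) c.
Proof. by move=> [c0 hA]; split=> // v; rewrite mulNmx sqnormN. Qed.

Lemma sqnorm_leZ m n (A : 'M[R]_(m, n)) s c :
  sqnorm_le A c -> sqnorm_le (s *: A) (s ^+ 2 * c).
Proof.
move=> [c0 hA]; split=> [|v]; first by rewrite mulr_ge0 ?sqr_ge0.
by rewrite -scalemxAl sqnormZ -mulrA ler_wpM2l ?sqr_ge0.
Qed.

Lemma sqnorm_leZV m n (A : 'M[R]_(m, n)) s c :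
  s != 0 -> sqnorm_le (s *: A) c -> sqnorm_le A (c / s ^+ 2).
Proof.
move=> s0 /(sqnorm_leZ s^-1); rewrite scalerA mulVf // scale1r.
by rewrite mulrC exprVn.
Qed.

End SquaredNormBounds.

Section WeightedPermutations.
Variable R : realFieldType.

Definition wperm_mx n (f : 'I_n -> 'I_n) (w : 'I_n -> R) : 'M[R]_n :=
  \matrix_(i, j) (w i * (j == f i)%:R).

Lemma wperm_mulmx n f w (v : 'cV[R]_n) i : (wperm_mx f w *m v) i 0 = w i * v (f i) 0.
Proof.
rewrite mxE (bigD1 (f i)) //= big1 => [|l /negbTE hl]; rewrite !mxE.
  by rewrite eqxx mulr1 addr0.
by rewrite hl mulr0 mul0r.
Qed.

Lemma sqnorm_le_wperm n (f : 'I_n -> 'I_n) w W :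
  injective f -> 0 <= W -> (forall i, `|w i| <= W) -> sqnorm_le (wperm_mx f w) (W ^+ 2).
Proof.
move=> f_inj W0 hw; split=> [|v]; first exact: sqr_ge0.
rewrite /sqnorm [X in _ <= _ * X](reindex_inj f_inj) mulr_sumr.
apply: ler_sum => i _; rewrite wperm_mulmx exprMn ler_wpM2r ?sqr_ge0 //.
by rewrite -real_normK ?num_real // lerXn2r ?nnegrE.
Qed.

Lemma mul_wperm_mx n (f g : 'I_n -> 'I_n) w u :
  wperm_mx f w *m wperm_mx g u = wperm_mx (g \o f) (fun i => w i * u (f i)).
Proof.
apply/matrixP => i j; rewrite !mxE (bigD1 (f i)) //= big1 => [|l /negbTE hl].
  by rewrite !mxE eqxx mulr1 addr0 mulrA.
by rewrite !mxE hl mulr0 mul0r.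
Qed.

Lemma wperm_mxB n (f : 'I_n -> 'I_n) w u :
  wperm_mx f w - wperm_mx f u = wperm_mx f (fun i => w i - u i).
Proof. by apply/matrixP => i j; rewrite !mxE mulrBl. Qed.

Lemma scale_wperm_mx n (f : 'I_n -> 'I_n) s w :
  s *: wperm_mx f w = wperm_mx f (fun i => s * w i).
Proof. by apply/matrixP => i j; rewrite !mxE mulrA. Qed.

Lemma wperm_mx1 n : wperm_mx id (fun _ : 'I_n => 1) = 1%:M.
Proof. by apply/matrixP => i j; rewrite !mxE mul1r eq_sym. Qed.

Lemma diag_wperm_comm n (d e : 'I_n -> R) :
  wperm_mx id d *m wperm_mx id e = wperm_mx id e *m wperm_mx id d.
Proof. by rewrite !mul_wperm_mx; congr wperm_mx; apply/funext => i; rewrite mulrC. Qed.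

End WeightedPermutations.

Section Commutators.
Variable R : realType.

Lemma commutMl n (A B C : 'M[R]_n) :
  commut (A *m B) C = A *m commut B C + commut A C *m B.
Proof. by rewrite /commut mulmxBr mulmxBl !mulmxA addrA subrK. Qed.

Lemma commutBl n (A B C : 'M[R]_n) :
  commut (A - B) C = commut A C - commut B C.
Proof.
by rewrite /commut mulmxBl mulmxBr !opprB addrACA [RHS]addrACA [in RHS](addrC (- _)).
Qed.

Lemma commutMM n (A B C D : 'M[R]_n) : A *m C = C *m A -> B *m D = D *m B ->
  commut (A *m B) (C *m D) = A *m commut B C *m D - C *m commut D A *m B.
Proof.
move=> AC BD; rewrite /commut !(mulmxBr, mulmxBl) !mulmxA.
by rewrite -(mulmxA A) AC -!mulmxA BD !mulmxA opprB addrA subrK.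
Qed.

Lemma commut_wperm_diag n (f : 'I_n -> 'I_n) (w d : 'I_n -> R) :
  commut (wperm_mx f w) (wperm_mx id d) = wperm_mx f (fun i => w i * (d (f i) - d i)).
Proof.
rewrite /commut !mul_wperm_mx wperm_mxB; congr wperm_mx.
by apply/funext => i; rewrite mulrBr [d i * _]mulrC.
Qed.

End Commutators.

Section DifferenceMatrices.
Variable R : realType.

Lemma DF_wperm N :
  DF R N = wperm_mx (@ordS N) (fun _ => N%:R) - wperm_mx id (fun _ => N%:R).
Proof.
apply/matrixP => i j; rewrite !mxE addn1 mulrBr -!val_eqE /= (eq_sym (val i)).
by case: (_ == _); case: (_ == _).
Qed.

Lemma DB_wperm N :
  DB R N = wperm_mx id (fun _ => N%:R) - wperm_mx (@ord_pred N) (fun _ => N%:R).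
Proof.
apply/matrixP => i j; rewrite !mxE addn1 mulrBr opprB.
have -> : (j == ord_pred i) = (ordS j == i).
  by apply/eqP/eqP => [->|<-]; [exact: ord_predK | rewrite ordSK].
rewrite -!val_eqE /= (eq_sym (val i)).
by case: (_ == _); case: (_ == _).
Qed.

Lemma sampleDiag_wperm (a b : R) (y : R -> R) N :
  sampleDiag a b y N = wperm_mx id (fun i : 'I_N => y (gridpt a b N i)).
Proof. by apply/matrixP => i j; rewrite !mxE eq_sym; case: eqP; rewrite ?mulr1 ?mulr0. Qed.

Lemma DF_DB_comm N : DF R N *m DB R N = DB R N *m DF R N.
Proof.
rewrite DF_wperm DB_wperm !(mulmxBl, mulmxBr) !mul_wperm_mx.
by apply/matrixP => i j; rewrite !mxE /= ordSK ord_predK; ring.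
Qed.

Lemma Dk_expr k N : Dk R k N = DF R N ^+ odd k * D2 R N ^+ k./2.
Proof. by rewrite /Dk; case: odd; rewrite ?expr1 ?expr0 ?mul1r ?mulmxE. Qed.

Lemma Dk_comm k j N : Dk R k N *m Dk R j N = Dk R j N *m Dk R k N.
Proof.
have cFB : GRing.comm (DF R N) (DB R N) by rewrite /GRing.comm -!mulmxE DF_DB_comm.
have cF2 : GRing.comm (DF R N) (D2 R N) by rewrite /D2 mulmxE; exact: commrM.
rewrite mulmxE !Dk_expr.
by apply: commrM; apply/commr_sym; apply: commrM; apply/commr_sym;
  apply: commrX; apply/commr_sym; apply: commrX; first exact: commr_refl.
Qed.

End DifferenceMatrices.

Section RealFunctions.
Variable R : realType.
Local Open Scope classical_set_scope.

Lemma continuous_itv_bounded (f : R -> R) (a b : R) :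
  a <= b -> {within `[a, b], continuous f} ->
  exists M, 0 <= M /\ forall t, a <= t -> t <= b -> `|f t| <= M.
Proof.
move=> ab cf.
have cnf : {within `[a, b], continuous (fun x => `|f x|)}.
  by apply: within_continuous_comp => // x _; exact: norm_continuous.
have [c _ hc] := EVT_max ab cnf.
by exists `|f c|; split=> // t ta tb; apply: hc; rewrite in_itv /= ta tb.
Qed.

Lemma derive1_bounded_lipschitz (f : R -> R) (a b L : R) :
  (forall x, derivable f x 1) -> (forall t, a <= t -> t <= b -> `|f^`() t| <= L) ->
  forall u v, a <= u -> u <= v -> v <= b -> `|f v - f u| <= L * (v - u).
Proof.
move=> df hL u v au uv vb.
have cf : {within `[u, v], continuous f}.
  by apply: derivable_within_continuous => x _; exact: df.
have hd x : x \in `]u, v[%R -> is_derive x 1 f (f^`() x).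
  by move=> _; rewrite derive1E; exact/derivableP/df.
have [c + ->] := MVT_segment uv hd cf; rewrite in_itv /= => /andP[uc cv].
rewrite normrM (ger0_norm (x := v - u)) ?subr_ge0 // ler_wpM2r ?subr_ge0 //.
exact: hL (le_trans au uc) (le_trans cv vb).
Qed.

Lemma smooth_bounded (y : R -> R) (a b : R) : a <= b -> is_smooth y ->
  exists M, 0 <= M /\ forall t, a <= t -> t <= b -> `|y t| <= M.
Proof.
move=> ab sy; apply: continuous_itv_bounded ab _.
by apply: derivable_within_continuous => x _; exact: (sy 0%N x).
Qed.

Lemma smooth_lipschitz (y : R -> R) (a b : R) : a <= b -> is_smooth y ->
  exists L, 0 <= L /\
    forall u v, a <= u -> u <= v -> v <= b -> `|y v - y u| <= L * (v - u).
Proof.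
move=> ab sy.
have [L [L0 hL]] : exists L, 0 <= L /\ forall t, a <= t -> t <= b -> `|y^`() t| <= L.
  apply: continuous_itv_bounded ab _.
  by apply: derivable_within_continuous => x _; exact: (sy 1%N x).
by exists L; split=> //; apply: derive1_bounded_lipschitz => // x; exact: (sy 0%N x).
Qed.

End RealFunctions.

Section Grid.
Variables (R : realType) (a b : R).
Hypothesis ab : a <= b.

Lemma gridpt_itv N i : (i <= N)%N -> a <= gridpt a b N i <= b.
Proof.
move=> iN; have t01 : 0 <= (i%:R / N%:R : R) <= 1.
  case: N iN => [|N] iN; first by rewrite leqn0 in iN; rewrite (eqP iN) mul0r lexx ler01.
  by rewrite divr_ge0 //= ler_pdivrMr ?ltr0Sn // mul1r ler_nat.
rewrite /gridpt; move: (i%:R / N%:R) t01 => t /andP[t0 t1].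
by rewrite lerDl -lerBrDl mulr_ge0 ?ler_piMr ?subr_ge0.
Qed.

Lemma gridptS N i : gridpt a b N i.+1 = gridpt a b N i + (b - a) / N%:R.
Proof. by rewrite /gridpt -natr1 [(_ + 1) / _]mulrDl mulrDr addrA mul1r. Qed.

Lemma periodic_gridpt_ordS (y : R -> R) N (i : 'I_N) :
  is_periodic (b - a) y -> y (gridpt a b N (ordS i)) = y (gridpt a b N i.+1).
Proof.
move=> py; rewrite /ordS /=; case: (ltngtP i.+1 N) (ltn_ord i) => [iN _|//|iN _].
  by rewrite modn_small.
have N0 : N%:R != 0 :> R by rewrite pnatr_eq0 -iN.
by rewrite iN modnn /gridpt divff // mul0r mulr0 addr0 mulr1 py.
Qed.

Lemma periodic_lipschitz_gridpt (y : R -> R) L N (i : 'I_N) : is_periodic (b - a) y ->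
  (forall u v, a <= u -> u <= v -> v <= b -> `|y v - y u| <= L * (v - u)) ->
  `|y (gridpt a b N (ordS i)) - y (gridpt a b N i)| <= L * (b - a) / N%:R.
Proof.
move=> py hL; rewrite periodic_gridpt_ordS // gridptS.
have /andP[ai _] := gridpt_itv (ltnW (ltn_ord i)).
have /andP[_ ib] : a <= gridpt a b N i.+1 <= b by exact: gridpt_itv.
rewrite -gridptS; apply: le_trans (hL _ _ ai _ ib) _.
  by rewrite gridptS lerDl divr_ge0 ?subr_ge0.
by rewrite gridptS addrAC subrr add0r mulrA.
Qed.

End Grid.

Section Heights.
Variable R : realType.

(* Squared form of [ht_le F m]; [N = 0] is excluded so that [N%:R] can be
   divided out, as in [sqht_le_unscale]. *)
Definition sqht_le (F : forall N : nat, 'M[R]_N) (m : nat) : Prop :=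
  exists C, 0 <= C /\ forall N, (0 < N)%N -> sqnorm_le (F N) (C * N%:R ^+ (2 * m)).

Lemma sqht_le_ext (F G : forall N : nat, 'M[R]_N) m :
  (forall N, F N = G N) -> sqht_le F m -> sqht_le G m.
Proof. by move=> FG [C [C0 hC]]; exists C; split=> // N N0; rewrite -FG; exact: hC. Qed.

Lemma sqht_leM (F G : forall N : nat, 'M[R]_N) p q :
  sqht_le F p -> sqht_le G q -> sqht_le (fun N => F N *m G N) (p + q).
Proof.
move=> [C [C0 hC]] [D [D0 hD]]; exists (C * D); split=> [|N N0]; first exact: mulr_ge0.
by have := sqnorm_leM (hC N N0) (hD N N0); rewrite mulnDr exprD mulrACA.
Qed.

Lemma sqht_leD (F G : forall N : nat, 'M[R]_N) m :
  sqht_le F m -> sqht_le G m -> sqht_le (fun N => F N + G N) m.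
Proof.
move=> [C [C0 hC]] [D [D0 hD]]; exists (2 * C + 2 * D).
split=> [|N N0]; first by rewrite addr_ge0 ?mulr_ge0.
by apply: sqnorm_leW (sqnorm_leD (hC N N0) (hD N N0)); rewrite [X in _ <= X]mulrDl !mulrA.
Qed.

Lemma sqht_leN (F : forall N : nat, 'M[R]_N) m :
  sqht_le F m -> sqht_le (fun N => - F N) m.
Proof. by move=> [C [C0 hC]]; exists C; split=> // N N0; exact/sqnorm_leN/hC. Qed.

Lemma sqht_leB (F G : forall N : nat, 'M[R]_N) m :
  sqht_le F m -> sqht_le G m -> sqht_le (fun N => F N - G N) m.
Proof. by move=> hF /sqht_leN; exact: sqht_leD. Qed.

Lemma sqht_le_unscale (F : forall N : nat, 'M[R]_N) m :
  sqht_le (fun N => N%:R *: F N) m.+1 -> sqht_le F m.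
Proof.
move=> [C [C0 hC]]; exists C; split=> // N N0.
have N0' : N%:R != 0 :> R by rewrite pnatr_eq0 -lt0n.
have := sqnorm_leZV N0' (hC N N0).
by rewrite mulnS exprD [_ ^+ 2 * _]mulrC mulrA mulrK // unitfE expf_neq0.
Qed.

Lemma sqht_le_wperm (f : forall N, 'I_N -> 'I_N) (w : forall N, 'I_N -> R) C m :
  0 <= C -> (forall N, injective (f N)) -> (forall N i, `|w N i| <= C * N%:R ^+ m) ->
  sqht_le (fun N => wperm_mx (f N) (w N)) m.
Proof.
move=> C0 f_inj hw; exists (C ^+ 2); split=> [|N _]; first exact: sqr_ge0.
rewrite mulnC exprM -exprMn; apply: sqnorm_le_wperm => //.
by rewrite mulr_ge0 ?exprn_ge0.
Qed.

Lemma opnorm2_le_sqrt n (A : 'M[R]_n) c : sqnorm_le A c -> opnorm2 A <= Num.sqrt c.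
Proof.
move=> [c0 hA]; apply: ge_sup.
  by exists (vnorm2 (A *m 0)), 0; split; rewrite // /vnorm2 -/(sqnorm 0) sqnorm0 sqrtr0.
move=> _ [v [hv ->]]; rewrite /vnorm2 ler_wsqrtr //.
have v1 : sqnorm v <= 1 by move: hv; rewrite /vnorm2 -[X in _ <= X]sqrtr1 ler_sqrt.
by apply: le_trans (hA v) _; rewrite ler_piMr.
Qed.

Lemma ht_le_of_sqht_le (F : forall N : nat, 'M[R]_N) m : sqht_le F m -> ht_le F m.
Proof.
move=> [C [C0 hC]]; exists (Num.sqrt C), 1%N => N N1.
apply: le_trans (opnorm2_le_sqrt (hC N N1)) _.
by rewrite sqrtrM // mulnC exprM sqrtr_sqr ger0_norm.
Qed.

Lemma sqht_le_commutMM (Y1 Y2 D1 D2 : forall N : nat, 'M[R]_N) p q :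
  (forall N, Y1 N *m Y2 N = Y2 N *m Y1 N) -> (forall N, D1 N *m D2 N = D2 N *m D1 N) ->
  sqht_le Y1 0 -> sqht_le Y2 0 -> sqht_le D1 p -> sqht_le D2 q ->
  sqht_le (fun N => N%:R *: commut (D1 N) (Y2 N)) p ->
  sqht_le (fun N => N%:R *: commut (D2 N) (Y1 N)) q ->
  sqht_le (fun N => N%:R *: commut (Y1 N *m D1 N) (Y2 N *m D2 N)) (p + q).
Proof.
move=> cY cD hY1 hY2 hD1 hD2 c12 c21.
apply: (sqht_le_ext (F := fun N => Y1 N *m (N%:R *: commut (D1 N) (Y2 N)) *m D2 N -
                                  Y2 N *m (N%:R *: commut (D2 N) (Y1 N)) *m D1 N)).
  by move=> N; rewrite -!scalemxAr -!scalemxAl -scalerBr (commutMM (cY N) (cD N)).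
apply: sqht_leB; first exact: sqht_leM (sqht_leM hY1 c12) hD2.
by rewrite addnC; exact: sqht_leM (sqht_leM hY2 c21) hD1.
Qed.

End Heights.

Lemma sqht_le_sampleDiag (R : realType) (a b M : R) (y : R -> R) : a <= b ->
  (forall t, a <= t -> t <= b -> `|y t| <= M) -> 0 <= M ->
  sqht_le (fun N => sampleDiag a b y N) 0.
Proof.
move=> ab hM M0; apply: sqht_le_ext (fun N => esym (sampleDiag_wperm a b y N)) _.
apply: sqht_le_wperm M0 (fun N => @inj_id _) _ => N i; rewrite expr0 mulr1.
by have /andP[ai ib] := gridpt_itv ab (ltnW (ltn_ord i)); exact: hM.
Qed.

Section CommutatorHeights.
Variables (R : realType) (a b L : R) (y : R -> R).
Hypotheses (ab : a <= b) (L0 : 0 <= L) (py : is_periodic (b - a) y).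
Hypothesis y_lipschitz :
  forall u v, a <= u -> u <= v -> v <= b -> `|y v - y u| <= L * (v - u).

Let Y N := sampleDiag a b y N.

(* [F] has height [m] and [[F, Y]] has height [m - 1]. *)
Definition ht_comm_le (F : forall N : nat, 'M[R]_N) (m : nat) : Prop :=
  sqht_le F m /\ sqht_le (fun N => N%:R *: commut (F N) (Y N)) m.

Lemma ht_comm_le_ext (F G : forall N : nat, 'M[R]_N) m :
  (forall N, F N = G N) -> ht_comm_le F m -> ht_comm_le G m.
Proof.
move=> FG [hF cF]; split; first exact: sqht_le_ext hF.
by apply: sqht_le_ext cF => N; rewrite FG.
Qed.

Lemma ht_comm_leM (F G : forall N : nat, 'M[R]_N) p q :
  ht_comm_le F p -> ht_comm_le G q -> ht_comm_le (fun N => F N *m G N) (p + q).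
Proof.
move=> [hF cF] [hG cG]; split; first exact: sqht_leM.
apply: (sqht_le_ext (F := fun N => F N *m (N%:R *: commut (G N) (Y N)) +
                                  (N%:R *: commut (F N) (Y N)) *m G N)).
  by move=> N; rewrite -scalemxAl -scalemxAr -scalerDr commutMl.
by apply: sqht_leD; exact: sqht_leM.
Qed.

Lemma ht_comm_leB (F G : forall N : nat, 'M[R]_N) m :
  ht_comm_le F m -> ht_comm_le G m -> ht_comm_le (fun N => F N - G N) m.
Proof.
move=> [hF cF] [hG cG]; split; first exact: sqht_leB.
apply: sqht_le_ext (sqht_leB cF cG) => N.
by rewrite -scalerBr commutBl.
Qed.

Lemma ht_comm_le_shift (f : forall N, 'I_N -> 'I_N) m : (forall N, injective (f N)) ->
  (forall N i, `|y (gridpt a b N (f N i)) - y (gridpt a b N i)| <= L * (b - a) / N%:R) ->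
  ht_comm_le (fun N => wperm_mx (f N) (fun _ => N%:R ^+ m)) m.
Proof.
move=> f_inj hf; split.
  by apply: (sqht_le_wperm (C := 1)) => // N i; rewrite mul1r ger0_norm.
pose dy N i := y (gridpt a b N (f N i)) - y (gridpt a b N i).
apply: (sqht_le_ext (F := fun N => wperm_mx (f N) (fun i => N%:R * (N%:R ^+ m * dy N i)))).
  by move=> N; rewrite /Y sampleDiag_wperm commut_wperm_diag scale_wperm_mx.
apply: (sqht_le_wperm (C := L * (b - a))) => //; first by rewrite mulr_ge0 ?subr_ge0.
move=> [[]//|N] i; have := hf N.+1 i; rewrite ler_pdivlMr ?ltr0Sn // => hdy.
rewrite !normrM normrX normr_nat mulrCA [X in _ <= X]mulrC.
by rewrite ler_wpM2l ?exprn_ge0 // mulrC.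
Qed.

Lemma ht_comm_le1 : ht_comm_le (fun N => 1%:M) 0.
Proof.
apply: (ht_comm_le_ext (F := fun N => wperm_mx id (fun _ => N%:R ^+ 0))).
  by move=> N; rewrite expr0 wperm_mx1.
apply: ht_comm_le_shift => [N|N i]; first exact: inj_id.
by rewrite subrr normr0 mulr_ge0 ?invr_ge0 ?mulr_ge0 ?subr_ge0.
Qed.

Lemma ht_comm_leX (F : forall N : nat, 'M[R]_N) m n :
  ht_comm_le F m -> ht_comm_le (fun N => F N ^+ n) (m * n).
Proof.
move=> hF; elim: n => [|n IH].
  by rewrite muln0; apply: ht_comm_le_ext ht_comm_le1 => N; rewrite expr0.
rewrite mulnS; apply: ht_comm_le_ext (ht_comm_leM hF IH) => N.
by rewrite exprS mulmxE.
Qed.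

Lemma ht_comm_le_DF : ht_comm_le (@DF R) 1.
Proof.
apply: ht_comm_le_ext (fun N => esym (DF_wperm R N)) _.
apply: ht_comm_leB; apply: ht_comm_le_shift => N.
- exact: ordS_inj.
- by move=> i; exact: periodic_lipschitz_gridpt.
- exact: inj_id.
- by move=> i; rewrite subrr normr0 mulr_ge0 ?invr_ge0 ?mulr_ge0 ?subr_ge0.
Qed.

Lemma ht_comm_le_DB : ht_comm_le (@DB R) 1.
Proof.
apply: ht_comm_le_ext (fun N => esym (DB_wperm R N)) _.
apply: ht_comm_leB; apply: ht_comm_le_shift => N.
- exact: inj_id.
- by move=> i; rewrite subrr normr0 mulr_ge0 ?invr_ge0 ?mulr_ge0 ?subr_ge0.
- exact: ord_pred_inj.
- by move=> i; rewrite distrC -{1}(ord_predK i); exact: periodic_lipschitz_gridpt.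
Qed.

Lemma ht_comm_le_Dk k : ht_comm_le (@Dk R k) k.
Proof.
have hD2 : ht_comm_le (@D2 R) 2 := ht_comm_leM ht_comm_le_DB ht_comm_le_DF.
have := ht_comm_leM (ht_comm_leX (odd k) ht_comm_le_DF) (ht_comm_leX k./2 hD2).
rewrite mul1n mul2n odd_double_half; apply: ht_comm_le_ext => N.
by rewrite Dk_expr mulmxE.
Qed.

End CommutatorHeights.

Theorem lemma4p6 (R : realType) (a b : R) (k j : nat) (yk yj : R -> R) :
  a < b -> (1 <= k)%N -> (1 <= j)%N ->
  is_smooth yk -> is_smooth yj -> is_periodic (b - a) yk -> is_periodic (b - a) yj ->
  ht_le (fun N : nat => commut (sampleDiag a b yk N *m Dk R k N)
                               (sampleDiag a b yj N *m Dk R j N))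
        (k + j - 1).
Proof.
move=> /ltW ab k1 j1 sk sj pk pj.
have [Mk [Mk0 hMk]] := smooth_bounded ab sk.
have [Mj [Mj0 hMj]] := smooth_bounded ab sj.
have [Lk [Lk0 hLk]] := smooth_lipschitz ab sk.
have [Lj [Lj0 hLj]] := smooth_lipschitz ab sj.
have [hDk cDk] := ht_comm_le_Dk ab Lj0 pj hLj k.
have [hDj cDj] := ht_comm_le_Dk ab Lk0 pk hLk j.
have hYk := sqht_le_sampleDiag ab hMk Mk0.
have hYj := sqht_le_sampleDiag ab hMj Mj0.
apply/ht_le_of_sqht_le/sqht_le_unscale; rewrite subn1 prednK ?addn_gt0 ?k1 //.
apply: (sqht_le_commutMM _ (Dk_comm R k j) (sqht_le_sampleDiag ab hMk Mk0)
          (sqht_le_sampleDiag ab hMj Mj0) hDk hDj cDk cDj) => N.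
by rewrite !sampleDiag_wperm diag_wperm_comm.
Qed.
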